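(* Let $q\ge 2$ and $n\ge 2$. If there is an ordering of all words of $\mathbb{Z}_q^{n-1}$ in which consecutive words have Hamming distance $1$, starting with $(0,\ldots,0)$ and ending with $(1,\ldots,1)$, then a quasi-complementary Hamming metric Gray code of $q$-ary $n$-tuples exists. Likewise, if there is such an ordering of $\mathbb{Z}_q^{n-1}$ in which consecutive words have Lee distance $1$, starting with $(0,\ldots,0)$ and ending with $(1,\ldots,1)$, then a quasi-complementary Lee metric Gray code of $q$-ary $n$-tuples exists.
   Context: Hamming distance between two words is the number of coordinates in which they differ. Lee distance between $v,u\in\mathbb{Z}_q^n$ is $\sum_{i}\min\{|v_i-u_i|,q-|v_i-u_i|\}$ (entries regarded as integers in $\{0,\ldots,q-1\}$). A quasi-complementary Hamming (resp. Lee) metric Gray code of $q$-ary $n$-tuples is an ordering $G(0),\ldots,G(q^n-1)$ of all words of $\mathbb{Z}_q^n$ such that consecutive words $G(i),G(i+1)$ ($0\le i<q^n-1$) have Hamming (resp. Lee) distance $1$, and $G((i+q^{n-1})\bmod q^n)=G(i)+(1,1,\ldots,1)$ for all $i$, with addition in $\mathbb{Z}_q^n$. *)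

From mathcomp Require Import all_boot all_order all_algebra.
Set Implicit Arguments. Unset Strict Implicit. Unset Printing Implicit Defensive.
Import GRing.Theory.
Local Open Scope ring_scope.

Definition word (q n : nat) := 'rV['Z_q]_n.

Definition hamming (q n : nat) (v u : word q n) : nat :=
  #|[set i : 'I_n | v ord0 i != u ord0 i]|.

Definition lee_coord {q : nat} (a b : 'Z_q) : nat :=
  let d := `|(nat_of_ord a : int) - (nat_of_ord b : int)|%N in minn d (q - d)%N.

Definition lee (q n : nat) (v u : word q n) : nat :=
  (\sum_(i < n) lee_coord (q:=q) (v ord0 i) (u ord0 i))%N.

Definition is_ordering (q n : nat) (s : seq (word q n)) : Prop :=
  uniq s /\ forall w : word q n, w \in s.

Definition consec_dist1 (q n : nat) (d : word q n -> word q n -> nat)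
  (s : seq (word q n)) : Prop :=
  forall i : nat, (i.+1 < size s)%N -> d (nth 0 s i) (nth 0 s i.+1) = 1%N.

Definition quasi_compl_gray (q n : nat) (d : word q n -> word q n -> nat)
  (s : seq (word q n)) : Prop :=
  is_ordering s /\ consec_dist1 d s /\
  forall i : nat, (i < q ^ n)%N ->
    nth 0 s ((i + q ^ n.-1) %% q ^ n) = nth 0 s i + const_mx 1.

From mathcomp Require Import all_boot all_order all_algebra.
From mathcomp Require Import zify.
Set Implicit Arguments.
Unset Strict Implicit.
Unset Printing Implicit Defensive.
Import GRing.Theory.
Local Open Scope ring_scope.

(* Both metrics are sums over coordinates of a translation-invariant distance
   on Z_q with d(0,1) = 1.  Given a path s_0 = 0, ..., s_(L-1) = 1 through
   Z_q^m with L = q^m, list the words (j, s_i + j) of Z_q^(m+1) for j < q,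
   i < L in lexicographic order of (j, i).  Inside a block the distances are
   those of s; between blocks, the last word (j, 1 + j) and the next one
   (j + 1, j + 1) differ only in the first coordinate, by one step; and
   moving forward by q^m entries adds one to j, i.e. adds (1, ..., 1) to the
   word, cyclically because q = 0 in Z_q. *)

Lemma ltn_mul_ind (P : nat -> Prop) (a b : nat) :
  (forall j i, (j < a)%N -> (i < b)%N -> P (j * b + i)%N) ->
  forall k, (k < a * b)%N -> P k.
Proof.
move=> hP k hk; have b_gt0 : (0 < b)%N by case: b hk {hP}; rewrite ?muln0.
by rewrite (divn_eq k b); apply: hP; rewrite ?ltn_mod ?ltn_divLR.
Qed.

Lemma eq_consec_dist1 (q n : nat) (d d' : word q n -> word q n -> nat)
    (s : seq (word q n)) :
  d =2 d' -> consec_dist1 d s -> consec_dist1 d' s.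
Proof. by move=> dd' hs i hi; rewrite -dd' hs. Qed.

Lemma eq_quasi_compl_gray (q n : nat) (d d' : word q n -> word q n -> nat)
    (s : seq (word q n)) :
  d =2 d' -> quasi_compl_gray d s -> quasi_compl_gray d' s.
Proof.
by move=> dd' [hord [hs hshift]]; do 2!split=> //; exact: eq_consec_dist1 hs.
Qed.

Section CoordinateDistance.
Variables (p : nat) (c : 'Z_p.+2 -> 'Z_p.+2 -> nat).
Local Notation q := p.+2.

Definition coord_dist {k : nat} (v u : word q k) : nat :=
  (\sum_(i < k) c (v ord0 i) (u ord0 i))%N.

Lemma coord_dist_row_mx (k l : nat) (a b : word q k) (v u : word q l) :
  coord_dist (row_mx a v : word q (k + l)) (row_mx b u) =
  (coord_dist a b + coord_dist v u)%N.
Proof.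
rewrite /coord_dist big_split_ord /=.
by congr addn; apply: eq_bigr => i _; rewrite ?row_mxEl ?row_mxEr.
Qed.

Lemma coord_dist1 (a b : word q 1) : coord_dist a b = c (a ord0 ord0) (b ord0 ord0).
Proof. by rewrite /coord_dist big_ord1. Qed.

Hypothesis c_translate : forall a b x, c (a + x) (b + x) = c a b.
Hypothesis c00 : c 0 0 = 0%N.
Hypothesis c01 : c 0 1 = 1%N.

Lemma coord_distxx (k : nat) (v : word q k) : coord_dist v v = 0%N.
Proof.
rewrite /coord_dist big1 // => i _.
by rewrite -[v _ _]add0r c_translate.
Qed.

Lemma coord_dist_translate (k : nat) (v u w : word q k) :
  coord_dist (v + w) (u + w) = coord_dist v u.
Proof. by apply: eq_bigr => i _; rewrite !mxE c_translate. Qed.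

Lemma c_natS (j : nat) : c j%:R j.+1%:R = 1%N.
Proof. by rewrite -nat1r -[j%:R]add0r addrA addr0 c_translate. Qed.

End CoordinateDistance.

Section Metrics.
Variable p : nat.
Local Notation q := p.+2.

Lemma hamming_coord_dist (k : nat) (v u : word q k) :
  hamming v u = coord_dist (fun a b : 'Z_q => (a != b : nat)) v u.
Proof.
rewrite /hamming -sum1_card big_mkcond /=; apply: eq_bigr => i _.
by rewrite inE; case: (_ != _).
Qed.

Lemma lee_coord_translate (a b x : 'Z_q) : lee_coord (a + x) (b + x) = lee_coord a b.
Proof.
have val_add (y z : 'Z_q) :
    nat_of_ord (y + z) = if (y + z < q)%N then (y + z)%N else (y + z - q)%N.
  rewrite [nat_of_ord (y + z)]/=; case: ltnP => [/modn_small // | yz_ge].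
  have y_lt : (y < q)%N := ltn_ord y; have z_lt : (z < q)%N := ltn_ord z.
  by rewrite -{1}(subnK yz_ge) modnDr modn_small //; lia.
rewrite /lee_coord !val_add.
have a_lt : (a < q)%N := ltn_ord a; have b_lt : (b < q)%N := ltn_ord b.
have x_lt : (x < q)%N := ltn_ord x.
by case: (ltnP (a + x) q); case: (ltnP (b + x) q); lia.
Qed.

Lemma lee_coord01 : lee_coord (0 : 'Z_q) 1 = 1%N.
Proof. by rewrite /lee_coord /=; lia. Qed.

Lemma size_ordering (k : nat) (s : seq (word q k)) : is_ordering s -> size s = (q ^ k)%N.
Proof.
move=> [s_uniq s_all]; rewrite -(card_uniqP s_uniq).
rewrite (eq_card (B := word q k)) => [|w]; last by rewrite s_all.
by rewrite card_mx card_ord mul1n.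
Qed.

End Metrics.

Section QuasiComplementaryExtension.
Variables (p m : nat).
Local Notation q := p.+2.
Local Notation L := (q ^ m)%N.

Definition layer (j : nat) (w : word q m) : word q m.+1 :=
  row_mx (const_mx j%:R : word q 1) (w + const_mx j%:R).

Lemma const_mx_natS (k j : nat) :
  const_mx j.+1%:R = const_mx j%:R + const_mx 1 :> word q k.
Proof. by apply/matrixP => ? ?; rewrite !mxE natr1. Qed.

Lemma layerS (j : nat) (w : word q m) : layer j.+1 w = layer j w + const_mx 1.
Proof.
rewrite /layer -[const_mx 1 in RHS](row_mx_const 1 1 m).
rewrite [RHS](add_row_mx (m:=1) (n1:=1)).
by rewrite !const_mx_natS addrA.
Qed.

Lemma layer_q (w : word q m) : layer q w = layer 0 w.
Proof. by rewrite /layer pchar_Zp. Qed.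

Lemma layer_inj (j j' : nat) (w w' : word q m) : (j < q)%N -> (j' < q)%N ->
  layer j w = layer j' w' -> j = j' /\ w = w'.
Proof.
move=> j_lt j'_lt; rewrite /layer => /(@eq_row_mx _ 1 1 m) [/matrixP /(_ ord0 ord0)].
rewrite !mxE => /(congr1 val) /=; rewrite !val_Zp_nat // !modn_small // => <-.
by move/addIr.
Qed.

Definition gray_ext (s : seq (word q m)) : seq (word q m.+1) :=
  mkseq (fun k => layer (k %/ L) (nth 0 s (k %% L))) (q * L).

Lemma size_gray_ext (s : seq (word q m)) : size (gray_ext s) = (q ^ m.+1)%N.
Proof. by rewrite size_mkseq expnS. Qed.

Lemma nth_gray_ext (s : seq (word q m)) (j i : nat) : (j < q)%N -> (i < L)%N ->
  nth 0 (gray_ext s) (j * L + i) = layer j (nth 0 s i).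
Proof.
move=> j_lt i_lt; have L_gt0 : (0 < L)%N by rewrite expn_gt0.
rewrite nth_mkseq; last by nia.
by rewrite divnMDl // divn_small // addn0 modnMDl modn_small.
Qed.

Section Distance.
Variable c : 'Z_q -> 'Z_q -> nat.
Hypothesis c_translate : forall a b x, c (a + x) (b + x) = c a b.
Hypothesis c00 : c 0 0 = 0%N.
Hypothesis c01 : c 0 1 = 1%N.

Lemma coord_dist_layer (j : nat) (v u : word q m) :
  coord_dist c (layer j v) (layer j u) = coord_dist c v u.
Proof.
by rewrite /layer (@coord_dist_row_mx _ c 1 m) coord_distxx // coord_dist_translate.
Qed.

Lemma coord_dist_layer_next (j : nat) :
  coord_dist c (layer j (const_mx 1)) (layer j.+1 0) = 1%N.
Proof.
rewrite /layer (@coord_dist_row_mx _ c 1 m) coord_dist1 !mxE c_natS //.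
by rewrite add0r const_mx_natS addrC coord_distxx.
Qed.

Variable s : seq (word q m).
Hypothesis s_ord : is_ordering s.
Hypothesis s_path : consec_dist1 (coord_dist c) s.
Hypothesis s_head : head 0 s = 0.
Hypothesis s_last : last 0 s = const_mx 1.

Let size_s : size s = L := size_ordering s_ord.

Lemma gray_ext_uniq : uniq (gray_ext s).
Proof.
apply/(uniqP 0) => k k'; rewrite !inE /= size_gray_ext expnS => k_lt k'_lt.
move: k k_lt k' k'_lt; apply: ltn_mul_ind => j i j_lt i_lt.
apply: ltn_mul_ind => j' i' j'_lt i'_lt.
rewrite !nth_gray_ext // => /layer_inj [] // <- /eqP.
by rewrite nth_uniq ?size_s //; [move/eqP <- | case: s_ord].
Qed.

Lemma gray_ext_mem (w : word q m.+1) : w \in gray_ext s.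
Proof.
have w_split := hsubmxK (w : 'M_(1, 1 + m)).
set a := lsubmx _ in w_split; set v := rsubmx _ in w_split.
pose j := nat_of_ord (a ord0 ord0).
have j_lt : (j < q)%N := ltn_ord _.
have a_const : a = const_mx j%:R.
  by apply/matrixP => x y; rewrite [x]ord1 [y]ord1 [RHS]mxE natr_Zp.
have /(nthP (0 : word q m)) [i i_lt s_i] := s_ord.2 (v - const_mx j%:R).
rewrite size_s in i_lt.
apply/(nthP 0); exists (j * L + i)%N; first by rewrite size_gray_ext expnS; nia.
by rewrite nth_gray_ext // /layer s_i subrK -a_const w_split.
Qed.

Lemma gray_ext_consec : consec_dist1 (coord_dist c) (gray_ext s).
Proof.
have L_gt0 : (0 < L)%N by rewrite expn_gt0.
move=> k; rewrite size_gray_ext expnS => k1_lt.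
have k_lt := ltnW k1_lt; move: k k_lt k1_lt.
apply: ltn_mul_ind => j i j_lt i_lt k1_lt.
have [i1_lt | i1_ge] := ltnP i.+1 L.
  rewrite -addnS !nth_gray_ext // coord_dist_layer //.
  by apply: s_path; rewrite size_s.
have i_last : i = L.-1 by lia.
have -> : (j * L + i).+1 = (j.+1 * L + 0)%N by rewrite mulSn; lia.
rewrite !nth_gray_ext //; last by nia.
have -> : nth 0 s i = const_mx 1 by rewrite -s_last -nth_last size_s i_last.
by rewrite nth0 s_head coord_dist_layer_next.
Qed.

Lemma gray_ext_shift (k : nat) : (k < q ^ m.+1)%N ->
  nth 0 (gray_ext s) ((k + L) %% q ^ m.+1) = nth 0 (gray_ext s) k + const_mx 1.
Proof.
rewrite expnS; move: k; apply: ltn_mul_ind => j i j_lt i_lt.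
rewrite nth_gray_ext // -layerS.
have [j1_lt | j1_ge] := ltnP j.+1 q.
  have -> : (j * L + i + L = j.+1 * L + i)%N by rewrite mulSn; lia.
  by rewrite modn_small ?nth_gray_ext //; nia.
have j1_eq : j.+1 = q by lia.
have -> : (j * L + i + L = q * L + (0 * L + i))%N by rewrite -j1_eq mulSn; lia.
by rewrite modnDl modn_small ?nth_gray_ext ?j1_eq ?layer_q //; nia.
Qed.

Lemma gray_ext_quasi_compl : quasi_compl_gray (coord_dist c) (gray_ext s).
Proof.
split; first by split; [exact: gray_ext_uniq | exact: gray_ext_mem].
by split; [exact: gray_ext_consec | exact: gray_ext_shift].
Qed.

End Distance.
End QuasiComplementaryExtension.

Theorem lemma2 (q n : nat) (hq : (2 <= q)%N) (hn : (2 <= n)%N) :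
  ((exists s : seq (word q n.-1),
      [/\ is_ordering s, consec_dist1 (@hamming q n.-1) s,
          head 0 s = 0 & last 0 s = const_mx 1]) ->
   exists g : seq (word q n), quasi_compl_gray (@hamming q n) g)
  /\
  ((exists s : seq (word q n.-1),
      [/\ is_ordering s, consec_dist1 (@lee q n.-1) s,
          head 0 s = 0 & last 0 s = const_mx 1]) ->
   exists g : seq (word q n), quasi_compl_gray (@lee q n) g).
Proof.
case: q hq => [|[|p]] // _; case: n hn => [|m] // _.
split=> -[s [s_ord s_path s_head s_last]]; exists (gray_ext s).
  apply: eq_quasi_compl_gray (fun v u => esym (hamming_coord_dist v u)) _.
  apply: gray_ext_quasi_compl => //.
  - by move=> a b x; rewrite (inj_eq (addIr x)).
  - exact: eq_consec_dist1 (@hamming_coord_dist _ _) s_path.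
exact: (@gray_ext_quasi_compl _ _ (@lee_coord _) (@lee_coord_translate _) _ (lee_coord01 _)).
Qed.
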